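(* Let $t\geq 2$ be an integer, and let $\delta$ and $\alpha$ be nonnegative integers. Assume that every $K_{t+1}$-minor-free graph has minimum degree at most $\delta$, and that every $K_t$-minor-free graph with exactly $\delta$ vertices has an independent set of size $\alpha$. Then every $K_{t+1}$-minor-free graph is $(\delta-\alpha+2)$-colourable.
   Context: All graphs are finite and simple. A graph is $K_s$-minor-free if it does not contain the complete graph $K_s$ as a minor. A graph is $k$-colourable if it has a proper vertex colouring with at most $k$ colours. *)

From mathcomp Require Import all_boot.
Set Implicit Arguments. Unset Strict Implicit. Unset Printing Implicit Defensive.

Definition simple_graph (T : finType) (e : rel T) : Prop :=
  symmetric e /\ irreflexive e.

Definition induced_rel (T : finType) (e : rel T) (B : {set T}) : rel T :=
  [rel x y | [&& e x y, x \in B & y \in B]].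

Definition connected_in (T : finType) (e : rel T) (B : {set T}) : Prop :=
  forall x y, x \in B -> y \in B -> connect (induced_rel e B) x y.

Definition has_K_minor (s : nat) (T : finType) (e : rel T) : Prop :=
  exists f : 'I_s -> {set T},
    [/\ forall i, f i != set0,
        forall i, connected_in e (f i),
        forall i j, i != j -> [disjoint f i & f j] &
        forall i j, i != j ->
          exists x, exists y, [/\ x \in f i, y \in f j & e x y]].

Definition K_minor_free (s : nat) (T : finType) (e : rel T) : Prop :=
  ~ has_K_minor s e.

Definition degree (T : finType) (e : rel T) (v : T) : nat :=
  #|[set u | e v u]|.

Definition min_degree_le (T : finType) (e : rel T) (d : nat) : Prop :=
  exists v : T, degree e v <= d.

Definition independent (T : finType) (e : rel T) (S : {set T}) : Prop :=
  forall x y, x \in S -> y \in S -> ~~ e x y.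

Definition colourable (k : nat) (T : finType) (e : rel T) : Prop :=
  exists c : T -> 'I_k, forall x y, e x y -> c x != c y.

From mathcomp Require Import all_boot zify.
Set Implicit Arguments. Unset Strict Implicit. Unset Printing Implicit Defensive.

(* The proof is by induction on the number of vertices.  Pick a vertex v of
   degree at most delta with neighbourhood N.  The graph G[N], padded with
   isolated vertices up to delta vertices, is K_t-minor-free (a K_t minor in
   it, together with the apex v, would be a K_{t+1} minor of G), so N contains
   an independent set I with |N| - |I| <= delta - alpha.  If I is empty we
   delete v; otherwise we contract the star v + I onto v.  Either way the
   smaller graph is a minor of G, hence colourable by induction, and it yields
   a colouring of G - v that is constant on I.  Then N sees at most delta - alpha + 1 colours
   and v receives a free one. *)

Definition K_model (s : nat) (T : finType) (e : rel T) (f : 'I_s -> {set T}) :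
    Prop :=
  [/\ forall i, f i != set0,
      forall i, connected_in e (f i),
      forall i j, i != j -> [disjoint f i & f j] &
      forall i j, i != j ->
        exists x, exists y, [/\ x \in f i, y \in f j & e x y]].

(* has_K_minor s e unfolds to: exists f, K_model e f. *)

Definition nbhd (T : finType) (e : rel T) (v : T) : {set T} := [set u | e v u].

Lemma disjointI (T : finType) (A B : {set T}) :
  (forall x, x \in A -> x \in B -> False) -> [disjoint A & B].
Proof.
by move=> AB; apply/pred0P => x /=; apply/negbTE/andP => -[/AB].
Qed.

Lemma connect_map (T U : finType) (h : T -> U) (e : rel T) (e' : rel U) :
  (forall x y, e x y -> connect e' (h x) (h y)) ->
  forall x y, connect e x y -> connect e' (h x) (h y).
Proof.
move=> eh x y /connectP [p]; elim: p x => [|z p IH] x /=; first by move=> _ ->.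
by case/andP=> /eh exz pz /(IH z pz); apply: connect_trans.
Qed.

Lemma connect_induced_sub (T : finType) (e : rel T) (A B : {set T}) x y :
  A \subset B -> connect (induced_rel e A) x y -> connect (induced_rel e B) x y.
Proof.
move=> AB; apply: connect_sub => {}x {}y /and3P [exy xA yA]; apply: connect1.
by apply/and3P; split; rewrite ?(subsetP AB).
Qed.

Lemma connected_set1 (T : finType) (e : rel T) (x : T) : connected_in e [set x].
Proof. by move=> y z; rewrite !inE => /eqP -> /eqP ->. Qed.

Lemma connected_star (T : finType) (e : rel T) (v : T) (I : {set T}) :
  symmetric e -> I \subset nbhd e v -> connected_in e (v |: I).
Proof.
move=> sym IN.
have to_v z : z \in v |: I -> connect (induced_rel e (v |: I)) z v /\
                              connect (induced_rel e (v |: I)) v z.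
  rewrite !inE => /orP [/eqP -> //|zI].
  have evz : e v z by have := subsetP IN z zI; rewrite inE.
  by split; apply: connect1; apply/and3P; rewrite !inE eqxx zI orbT // sym.
by move=> x y /to_v [xv _] /to_v [_ vy]; apply: connect_trans xv vy.
Qed.

(* In a K_s model with s >= 2 every branch vertex has a neighbour: its branch
   set is connected and sends an edge to another branch set. *)
Lemma K_model_no_isolated s (T : finType) (e : rel T) (f : 'I_s -> {set T})
    i x :
  1 < s -> K_model e f -> x \in f i -> exists y, e x y.
Proof.
move=> s2 [_ fcn _ fed] xi.
have [j ij] : exists j, i != j.
  have : 0 < #|predC1 i| by rewrite cardC1 card_ord; lia.
  by case/card_gt0P=> j; rewrite inE eq_sym; exists j.
have [x' [y' [x'i _ ex'y']]] := fed i j ij.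
case/connectP: (fcn i x x' xi x'i) => -[|z p] /=.
  by move=> _ x'x; exists y'; rewrite -x'x.
by case/andP=> /and3P [exz _ _] _ _; exists z.
Qed.

Lemma K_model_image s (U T : finType) (e' : rel U) (e : rel T) (h : U -> T)
    (f : 'I_s -> {set U}) :
  (forall a b, e' a b -> e (h a) (h b)) -> {in \bigcup_i f i &, injective h} ->
  K_model e' f -> K_model e (fun i => h @: f i).
Proof.
move=> hom hinj [fne fcn fdj fed]; split.
- by move=> i; rewrite imset_eq0.
- move=> i _ _ /imsetP [a ai ->] /imsetP [b bi ->].
  apply: connect_map (fcn i a b ai bi) => x y /and3P [exy xi yi].
  by apply: connect1; apply/and3P; rewrite hom ?imset_f.
- move=> i j ij; apply: disjointI => _ /imsetP [a ai ->] /imsetP [b bj].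
  have aU : a \in \bigcup_i f i by apply/bigcupP; exists i.
  have bU : b \in \bigcup_i f i by apply/bigcupP; exists j.
  move=> /(hinj _ _ aU bU) ab; subst b.
  by have := disjointFr (fdj i j ij) ai; rewrite bj.
- move=> i j ij; have [a [b [ai bj eab]]] := fed i j ij.
  by exists (h a), (h b); rewrite !imset_f ?hom.
Qed.

(* A K_s model inside the neighbourhood of v extends, with {v} as a new branch
   set, to a K_{s+1} minor. *)
Lemma K_model_apex s (T : finType) (e : rel T) (v : T) (f : 'I_s -> {set T}) :
  simple_graph e -> K_model e f -> (forall i, f i \subset nbhd e v) ->
  has_K_minor s.+1 e.
Proof.
move=> [sym irr] [fne fcn fdj fed] fN.
have evx i x : x \in f i -> e v x by move=> /(subsetP (fN i)); rewrite inE.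
have vNf i : v \notin f i by apply/negP => /evx; rewrite irr.
pose g (i : 'I_s.+1) := if unlift ord_max i is Some i' then f i' else [set v].
exists g; split.
- move=> i; rewrite /g; case: unliftP => [i' _|_]; first exact: fne.
  by apply/set0Pn; exists v; rewrite set11.
- move=> i; rewrite /g; case: unliftP => [i' _|_]; first exact: fcn.
  exact: connected_set1.
- move=> i j; rewrite /g.
  case: unliftP => [i' ->|->]; case: unliftP => [j' ->|->] //;
    try by rewrite eqxx.
  + by move=> ij; apply: fdj; apply: contraNneq ij => ->.
  + by move=> _; rewrite disjoint_sym disjoints1.
  + by move=> _; rewrite disjoints1.
- move=> i j; rewrite /g.
  case: unliftP => [i' ->|->]; case: unliftP => [j' ->|->] //;
    try by rewrite eqxx.
  + by move=> ij; apply: fed; apply: contraNneq ij => ->.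
  + move=> _; have /set0Pn [x xi] := fne i'.
    by exists x, v; rewrite xi set11 sym (evx i').
  + move=> _; have /set0Pn [x xj] := fne j'.
    by exists v, x; rewrite xj set11 (evx j').
Qed.

(* Quotients.  A partial map q : T -> option U contracts each fibre of q to a
   single vertex of U and deletes the vertices sent to None. *)
Section Quotient.
Variables (T U : finType) (e : rel T) (q : T -> option U).

Definition fibre (a : U) : {set T} := [set x | q x == Some a].

Definition quot_rel : rel U :=
  fun a b => (a != b) && [exists x in fibre a, exists y in fibre b, e x y].

Lemma quot_simple : symmetric e -> simple_graph quot_rel.
Proof.
move=> sym; split=> [a b|a]; last by rewrite /quot_rel eqxx.
rewrite /quot_rel eq_sym; congr (_ && _).
by apply/existsP/existsP => -[x /andP [xa /existsP [y /andP [yb exy]]]];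
  exists y; rewrite yb; apply/existsP; exists x; rewrite xa sym.
Qed.

Lemma quot_edge x y a b :
  q x = Some a -> q y = Some b -> a != b -> e x y -> quot_rel a b.
Proof.
move=> qx qy ab exy; rewrite /quot_rel ab; apply/existsP; exists x.
by rewrite inE qx eqxx; apply/existsP; exists y; rewrite inE qy eqxx.
Qed.

Lemma quot_connect (A : {set U}) :
  (forall a, connected_in e (fibre a)) ->
  forall a b, connect (induced_rel quot_rel A) a b -> a \in A ->
  forall x y, x \in fibre a -> y \in fibre b ->
  connect (induced_rel e (\bigcup_(c in A) fibre c)) x y.
Proof.
move=> conn; set W := \bigcup_(c in A) fibre c.
have fibreW d : d \in A -> fibre d \subset W.
  by move=> dA; apply/subsetP => z zd; apply/bigcupP; exists d.
move=> a b /connectP [p]; elim: p a => [|c p IH] a /=.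
  move=> _ -> aA x y xa ya.
  exact: connect_induced_sub (fibreW a aA) (conn a x y xa ya).
case/andP=> /and3P [/andP [_ ac] aA cA] pc lb _ x y xa yb.
case/existsP: ac => x' /andP [xa' /existsP [y' /andP [yc ex'y']]].
have x'y' : induced_rel e W x' y'.
  by apply/and3P; rewrite ex'y' (subsetP (fibreW a aA)) ?(subsetP (fibreW c cA)).
apply: connect_trans (connect_induced_sub (fibreW a aA) (conn a x x' xa xa')) _.
exact: connect_trans (connect1 x'y') (IH c pc lb cA y' y yc yb).
Qed.

Lemma quot_K_minor s :
  (forall a, fibre a != set0) -> (forall a, connected_in e (fibre a)) ->
  has_K_minor s quot_rel -> has_K_minor s e.
Proof.
move=> ne conn [f [fne fcn fdj fed]].
exists (fun i => \bigcup_(a in f i) fibre a); split.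
- move=> i; have /set0Pn [a ai] := fne i; have /set0Pn [x xa] := ne a.
  by apply/set0Pn; exists x; apply/bigcupP; exists a.
- move=> i x y /bigcupP [a ai xa] /bigcupP [b bi yb].
  exact: quot_connect conn a b (fcn i a b ai bi) ai x y xa yb.
- move=> i j ij; apply: disjointI => x /bigcupP [a ai xa] /bigcupP [b bj xb].
  move: xa xb; rewrite !inE => /eqP -> /eqP [ab]; subst b.
  by have := disjointFr (fdj i j ij) ai; rewrite bj.
- move=> i j ij; have [a [b [ai bj /andP [_ ab]]]] := fed i j ij.
  case/existsP: ab => x /andP [xa /existsP [y /andP [yb exy]]].
  by exists x, y; split => //; apply/bigcupP; [exists a | exists b].
Qed.

End Quotient.

Lemma fibre_insub (T : finType) (D : pred T) (r : T -> T) (a : {x | D x}) :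
  fibre (fun x => insub (r x)) a = [set x | r x == val a].
Proof.
apply/setP => x; rewrite !inE; case: insubP => [b _ <-|nDr] /=.
  by apply/eqP/eqP => [[->] | /val_inj ->].
by apply/esym/negbTE; apply: contra nDr => /eqP ->; apply: valP.
Qed.

Lemma card_sig_lt (T : finType) (D : pred T) (v : T) :
  ~~ D v -> #|{: {x | D x}}| < #|T|.
Proof.
move=> nDv; rewrite card_sig -(cardC [pred x | D x]) -addn1 leq_add2l.
by apply/card_gt0P; exists v; rewrite inE.
Qed.

Lemma extend_colouring k (T : finType) (e : rel T) (v : T) (c : T -> 'I_k) :
  simple_graph e -> (forall x y, x != v -> y != v -> e x y -> c x != c y) ->
  #|c @: nbhd e v| < k -> colourable k e.
Proof.
move=> [sym irr] cP ck.
have /card_gt0P [col] : 0 < #|~: (c @: nbhd e v)|.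
  by have := cardsC (c @: nbhd e v); rewrite card_ord; lia.
rewrite inE => colN.
have col_new z : e v z -> col != c z.
  by move=> evz; apply: contraNneq colN => ->; rewrite imset_f ?inE.
exists (fun x => if x == v then col else c x) => x y exy.
case: (eqVneq x v) => [xv|xv]; case: (eqVneq y v) => [yv|yv].
- by move: exy; rewrite xv yv irr.
- by apply: col_new; rewrite -xv.
- by rewrite eq_sym; apply: col_new; rewrite -yv sym.
- exact: cP.
Qed.

Lemma card_colours_collapse k (T : finType) (c : T -> 'I_k) (N I : {set T}) :
  I \subset N -> {in I &, forall x y, c x = c y} -> #|c @: N| <= #|N| - #|I| + 1.
Proof.
move=> IN cI.
have sub : c @: N \subset c @: (N :\: I) :|: c @: I.
  rewrite -imsetU; apply: imsetS; apply/subsetP => x xN.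
  by rewrite !inE xN andbT orNb.
have cI1 : #|c @: I| <= 1.
  by apply/card_le1_eqP => _ _ /imsetP [x xI ->] /imsetP [y yI ->]; apply: cI.
have := leq_trans (subset_leq_card sub) (leq_card_setU _ _).
have := leq_imset_card c (N :\: I); rewrite cardsD (setIidPr IN); lia.
Qed.

Section Reduction.
Variables (s k : nat) (T : finType) (e : rel T).
Hypothesis simple_e : simple_graph e.
Hypothesis free_e : K_minor_free s e.
Hypothesis smaller_colourable : forall (U : finType) (e' : rel U),
  #|U| < #|T| -> simple_graph e' -> K_minor_free s e' -> colourable k.+1 e'.

Lemma quot_colourable (U : finType) (q : T -> option U) :
  #|U| < #|T| -> (forall a, fibre q a != set0) ->
  (forall a, connected_in e (fibre q a)) -> colourable k.+1 (quot_rel e q).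
Proof.
move=> UT ne conn; apply: smaller_colourable => //.
  exact: quot_simple simple_e.1.
by move=> m; apply: free_e; apply: quot_K_minor m.
Qed.

Lemma colouring_delete (v : T) :
  exists c : T -> 'I_k.+1, forall x y, x != v -> y != v -> e x y -> c x != c y.
Proof.
have [sym irr] := simple_e.
pose q x : option {x | x != v} := insub x.
have fibreE a : fibre q a = [set val a].
  by rewrite (fibre_insub id); apply/setP => x; rewrite !inE.
have [c cP] : colourable k.+1 (quot_rel e q).
  apply: quot_colourable; first by apply: (card_sig_lt (v := v)); rewrite eqxx.
    by move=> a; rewrite fibreE; apply/set0Pn; exists (val a); rewrite set11.
  by move=> a; rewrite fibreE; apply: connected_set1.
exists (fun x => oapp c ord0 (q x)) => x y xv yv exy.
have qS z (zv : z != v) : q z = Some (Sub z zv) by rewrite /q insubT.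
have xy : Sub x xv != Sub y yv :> {x | x != v}.
  by apply: contraTneq exy => /(congr1 val) /= ->; rewrite irr.
by rewrite (qS x xv) (qS y yv); apply: cP (quot_edge (qS x xv) (qS y yv) xy exy).
Qed.

(* Contracting the star v + I onto v, for a nonempty independent I inside the
   neighbourhood of v: G - v has a colouring that is constant on I. *)
Lemma colouring_contract (v : T) (I : {set T}) :
  I != set0 -> I \subset nbhd e v -> independent e I ->
  exists c : T -> 'I_k.+1,
    (forall x y, x != v -> y != v -> e x y -> c x != c y) /\
    {in I &, forall x y, c x = c y}.
Proof.
move=> I0 IN indI; have [sym irr] := simple_e.
have vI : v \notin I by apply/negP => /(subsetP IN); rewrite inE irr.
pose r x := if x \in I then v else x.
have rI x : r x \notin I by rewrite /r; case: ifP => // /negbT.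
pose q x : option {x | x \notin I} := insub (r x).
have qS x : q x = Some (Sub (r x) (rI x)).
  by rewrite /q (@insubT _ (fun z => z \notin I) _ _ (rI x)).
have fibreE a : fibre q a = if val a == v then v |: I else [set val a].
  rewrite (fibre_insub r); have aI := valP a.
  apply/setP => x; have [av|av] := eqVneq (val a) v; rewrite !inE /r.
    by rewrite av; case: (x \in I); rewrite ?eqxx ?orbT ?orbF.
  case: ifP => xI //; rewrite eq_sym (negbTE av); apply/esym/eqP => xa.
  by move: aI; rewrite -xa /= xI.
have [c cP] : colourable k.+1 (quot_rel e q).
  apply: quot_colourable => [|a|a]; rewrite ?fibreE.
  - by have /set0Pn [u uI] := I0; apply: (card_sig_lt (v := u)); rewrite uI.
  - by case: ifP => _; apply/set0Pn;
      [exists v; rewrite setU11 | exists (val a); rewrite set11].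
  - by case: ifP => _; [apply: connected_star | apply: connected_set1].
exists (fun x => c (Sub (r x) (rI x))); split; last first.
  by move=> x y xI yI; congr c; apply: val_inj; rewrite /= /r xI yI.
move=> x y xv yv exy; apply: cP (quot_edge (qS x) (qS y) _ exy).
rewrite -(inj_eq val_inj) /= /r; case: ifP => xI; case: ifP => yI.
- by have := indI x y xI yI; rewrite exy.
- by rewrite eq_sym.
- by [].
- by apply: contraTneq exy => ->; rewrite irr.
Qed.
End Reduction.

Definition add_isolated (T : finType) (e : rel T) (m : nat) :
    rel (T + 'I_m)%type :=
  fun p p' => if (p, p') is (inl a, inl b) then e a b else false.
Arguments add_isolated {T} e m.

Definition padded_nbhd (T : finType) (e : rel T) (v : T) (m : nat) :
    rel ({x | x \in nbhd e v} + 'I_m)%type :=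
  add_isolated (relpre val e) m.
Arguments padded_nbhd {T} e v m.

Lemma padded_nbhd_simple (T : finType) (e : rel T) v m :
  simple_graph e -> simple_graph (padded_nbhd e v m).
Proof.
move=> [sym irr]; rewrite /padded_nbhd /add_isolated.
by split=> [[a|r] [b|r']|[a|r]] //=; rewrite /relpre ?irr // sym.
Qed.

(* A K_t minor (t >= 2) of the padded neighbourhood graph avoids the isolated
   vertices, so it lives in N(v) and v serves as the apex of a K_{t+1} minor. *)
Lemma padded_nbhd_free t (T : finType) (e : rel T) v m :
  1 < t -> simple_graph e -> K_minor_free t.+1 e ->
  K_minor_free t (padded_nbhd e v m).
Proof.
move=> t2 se free [f model]; apply: free.
pose h (p : ({x | x \in nbhd e v} + 'I_m)%type) : T :=
  if p is inl a then val a else v.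
have branch_inl i p : p \in f i -> exists a, p = inl a.
  case: p => [a|r] pi; first by exists a.
  by have [[b|b] //] := K_model_no_isolated t2 model pi.
apply: (K_model_apex (v := v) se (K_model_image (h := h) _ _ model)).
- by move=> [a|r] [b|r'].
- move=> p p' /bigcupP [i _ /branch_inl [a ->]] /bigcupP [j _ /branch_inl [b ->]].
  by move=> /val_inj ->.
- move=> i; apply/subsetP => _ /imsetP [p /branch_inl [a ->] ->].
  exact: valP a.
Qed.

Section ColouringMinorFree.
Variables (t delta alpha : nat).
Hypothesis t_ge2 : 1 < t.
Hypothesis low_degree : forall (T : finType) (e : rel T),
  simple_graph e -> K_minor_free t.+1 e -> 0 < #|T| -> min_degree_le e delta.
Hypothesis large_independent : forall (T : finType) (e : rel T),
  simple_graph e -> K_minor_free t e -> #|T| = delta ->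
  exists S : {set T}, independent e S /\ #|S| = alpha.

(* A vertex of degree at most delta has an independent set I of neighbours
   with |N(v)| - |I| <= delta - alpha: apply the hypothesis to the padded
   neighbourhood graph, which has exactly delta vertices. *)
Lemma nbhd_independent (T : finType) (e : rel T) (v : T) :
  simple_graph e -> K_minor_free t.+1 e -> #|nbhd e v| <= delta ->
  exists2 I : {set T}, I \subset nbhd e v &
    independent e I /\ alpha <= #|I| + (delta - #|nbhd e v|).
Proof.
move=> se free degv; set N := nbhd e v in degv *; set m := delta - #|N|.
have [S [indS cardS]] :
    exists S, independent (padded_nbhd e v m) S /\ #|S| = alpha.
  apply: large_independent; first exact: padded_nbhd_simple.
    exact: padded_nbhd_free.
  rewrite card_sum card_ord card_sig.
  have -> : #|[pred x | x \in N]| = #|N| by apply: eq_card.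
  by rewrite /m; lia.
pose SL := [set a | inl a \in S].
exists (val @: SL); first by apply/subsetP => _ /imsetP [a _ ->]; apply: valP.
split.
  move=> _ _ /imsetP [a aS ->] /imsetP [b bS ->]; rewrite !inE in aS bS.
  exact: indS aS bS.
have S_split : S \subset inl @: SL :|: inr @: 'I_m.
  by apply/subsetP => -[a|r] pS; rewrite !inE ?imset_f ?inE ?orbT.
rewrite card_imset; last exact: val_inj.
rewrite -cardS; apply: leq_trans (subset_leq_card S_split) _.
apply: leq_trans (leq_card_setU _ _) _.
apply: leq_add; first exact: leq_imset_card.
by apply: leq_trans (leq_imset_card _ _) _; rewrite card_ord.
Qed.

Lemma colour_step (T : finType) (e : rel T) :
  simple_graph e -> K_minor_free t.+1 e ->
  (forall (U : finType) (e' : rel U), #|U| < #|T| -> simple_graph e' ->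
     K_minor_free t.+1 e' -> colourable (delta - alpha).+2 e') ->
  colourable (delta - alpha).+2 e.
Proof.
move=> se free smaller; have [T0|Tpos] := posnP #|T|.
  exists (fun=> ord0) => x; have : 0 < #|T| by apply/card_gt0P; exists x.
  by rewrite T0.
have [v degv] := low_degree se free Tpos.
have [I IN [indI cardI]] := nbhd_independent se free degv.
have [c [cP cI]] : exists c : T -> 'I_(delta - alpha).+2,
    (forall x y, x != v -> y != v -> e x y -> c x != c y) /\
    {in I &, forall x y, c x = c y}.
  have [I0|I0] := eqVneq I set0.
    have [c cP] := colouring_delete se free smaller v.
    by exists c; split => // x; rewrite I0 inE.
  exact: (colouring_contract se free smaller I0 IN indI).
apply: (extend_colouring se cP).
have := card_colours_collapse IN cI; have := subset_leq_card IN.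
move: degv cardI; rewrite /degree -/(nbhd e v); lia.
Qed.
End ColouringMinorFree.

Theorem lemma1 (t delta alpha : nat) (ht : 2 <= t)
  (Hdeg : forall (T : finType) (e : rel T),
      simple_graph e -> K_minor_free t.+1 e -> 0 < #|T| ->
      min_degree_le e delta)
  (Hind : forall (T : finType) (e : rel T),
      simple_graph e -> K_minor_free t e -> #|T| = delta ->
      exists S : {set T}, independent e S /\ #|S| = alpha) :
  forall (T : finType) (e : rel T),
    simple_graph e -> K_minor_free t.+1 e -> colourable (delta - alpha + 2) e.
Proof.
move=> T e; rewrite addn2; have [n] := ubnP #|T|.
elim: n T e => // n IH T e Tn se free.
apply: (colour_step ht Hdeg Hind se free) => U e' UT.
by apply: IH; lia.
Qed.
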